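(* Let $\mathcal{M}$ be any mechanism that always returns a \textsc{Min-Max} outcome (an outcome minimizing $\max_{i\in N}d_i(\mathbf{o})$). Then $\mathcal{M}$ is not strategyproof: there exist an instance $(N,P,T,(\mathbf{D}_i)_{i\in N})$, an agent $i\in N$ and a disapproval vector $\mathbf{D}'_i$ with $d_i(\mathcal{M}(\mathcal{D}_{-i},\mathbf{D}'_i))<d_i(\mathcal{M}(\mathcal{D}_{-i},\mathbf{D}_i))$.
   Context: An instance is $(N,P,T,(\mathbf{D}_i)_{i\in N})$ with agents $N=[n]$, projects $P$, timesteps $T=[\ell]$, and disapproval vectors $\mathbf{D}_i=(D_{i1},\dots,D_{i\ell})$, $D_{ik}\subseteq P$. An outcome is $\mathbf{o}\in P^\ell$ and $d_i(\mathbf{o})=|\{k\in T:o_k\in D_{ik}\}|$, computed with respect to $i$'s true disapproval vector. A mechanism maps each instance to an outcome; it is strategyproof if for every instance, every agent $i$ and every $\mathbf{D}'_i$, $d_i(\mathcal{M}(\mathcal{D}_{-i},\mathbf{D}_i))\le d_i(\mathcal{M}(\mathcal{D}_{-i},\mathbf{D}'_i))$, where $\mathcal{D}_{-i}$ is the list of disapproval vectors of the agents other than $i$. *)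

From mathcomp Require Import all_boot.
Set Implicit Arguments. Unset Strict Implicit. Unset Printing Implicit Defensive.

(* Agents N = 'I_n, projects P = 'I_p (p = m.+1 > 0 in mechanisms), timesteps T = 'I_l. *)
Definition dvec (p l : nat) := {ffun 'I_l -> {set 'I_p}}.
Definition profile (n p l : nat) := {ffun 'I_n -> dvec p l}.
Definition outcome (p l : nat) := {ffun 'I_l -> 'I_p}.

Definition disutil n p l (D : profile n p l) (i : 'I_n) (o : outcome p l) : nat :=
  #|[set k : 'I_l | o k \in D i k]|.

Definition maxdis n p l (D : profile n p l) (o : outcome p l) : nat :=
  \max_(i < n) disutil D i o.

Definition is_minmax n p l (D : profile n p l) (o : outcome p l) : Prop :=
  forall o' : outcome p l, maxdis D o <= maxdis D o'.

Definition update n p l (D : profile n p l) (i : 'I_n) (Di' : dvec p l) : profile n p l :=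
  [ffun j => if j == i then Di' else D j].

Definition mechanism :=
  forall (n m l : nat), profile n m.+1 l -> outcome m.+1 l.

(* Two agents, two projects, three timesteps.  Agent 0 only minds the first
   project at the last timestep; agent 1 is unhappy at the middle timestep
   whatever happens and minds the second project at the last one.  A Min-Max
   outcome must then pick the first project at the last timestep (maximum 1
   rather than 2), so agent 0 is dissatisfied once.  If agent 0 instead reports disapproving
   everything at the first two timesteps, her reported disutility is already
   2, and picking the first project at the end would push it to 3 while the
   second project keeps the maximum at 2: the mechanism now picks the second
   project and agent 0's true disutility drops to 0. *)

From mathcomp Require Import all_boot.

Lemma disutil_sum {n p l : nat} (D : profile n p l) (i : 'I_n) (o : outcome p l) :
  disutil D i o = \sum_(k < l) (o k \in D i k).
Proof. by rewrite /disutil cardsE -sum1_card big_mkcond. Qed.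

Lemma disutil_update_other {n p l : nat} (D : profile n p l) (i j : 'I_n)
    (Di' : dvec p l) (o : outcome p l) :
  j != i -> disutil (update D i Di') j o = disutil D j o.
Proof. by move=> /negbTE ji; rewrite /disutil ffunE ji. Qed.

Lemma disutil_le_maxdis {n p l : nat} (D : profile n p l) (i : 'I_n) (o : outcome p l) :
  disutil D i o <= maxdis D o.
Proof. exact: (@leq_bigmax _ (fun j => disutil D j o)). Qed.

Lemma maxdis2 {p l : nat} (D : profile 2 p l) (o : outcome p l) :
  maxdis D o = maxn (disutil D ord0 o) (disutil D ord_max o).
Proof.
rewrite /maxdis big_ord_recl big_ord_recl big_ord0 maxn0.
by congr (maxn _ (disutil _ _ _)); apply: val_inj.
Qed.

Lemma minmax_disutil_le {n p l : nat} (D : profile n p l) (o : outcome p l) :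
  is_minmax D o -> forall (i : 'I_n) (o' : outcome p l), disutil D i o <= maxdis D o'.
Proof. by move=> minD i o'; apply: leq_trans (minD o'); apply: disutil_le_maxdis. Qed.

Lemma ord2_eq_max (x : 'I_2) : (x == ord_max) = (x != ord0).
Proof. by case: x => [[|[|]]]. Qed.

Definition honest0 : dvec 2 3 := [ffun k => if k == ord_max then [set ord0] else set0].

Definition honest1 : dvec 2 3 :=
  [ffun k => if k == ord0 then set0 else if k == ord_max then [set ord_max] else setT].

Definition misreport0 : dvec 2 3 :=
  [ffun k => if k == ord_max then [set ord0] else setT].

Definition honest : profile 2 2 3 := [ffun i => if i == ord0 then honest0 else honest1].

Definition misreported : profile 2 2 3 := update honest ord0 misreport0.

Lemma disutil_honest0 (o : outcome 2 3) : disutil honest ord0 o = (o ord_max == ord0).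
Proof. by rewrite disutil_sum !big_ord_recr big_ord0 !ffunE /= !inE. Qed.

Lemma disutil_honest1 (o : outcome 2 3) :
  disutil honest ord_max o = (o ord_max == ord_max).+1.
Proof. by rewrite disutil_sum !big_ord_recr big_ord0 !ffunE /= !inE. Qed.

Lemma disutil_misreported0 (o : outcome 2 3) :
  disutil misreported ord0 o = (o ord_max == ord0).+2.
Proof. by rewrite disutil_sum !big_ord_recr big_ord0 !ffunE /= !inE. Qed.

Lemma disutil_misreported1 (o : outcome 2 3) :
  disutil misreported ord_max o = (o ord_max == ord_max).+1.
Proof. by rewrite disutil_update_other // disutil_honest1. Qed.

Lemma honest_minmax_last {o : outcome 2 3} :
  is_minmax honest o -> o ord_max == ord0.
Proof.
move=> /minmax_disutil_le/(_ ord_max [ffun=> ord0]).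
by rewrite maxdis2 !disutil_honest0 !disutil_honest1 !ffunE ord2_eq_max; case: eqP.
Qed.

Lemma misreported_minmax_last {o : outcome 2 3} :
  is_minmax misreported o -> o ord_max != ord0.
Proof.
move=> /minmax_disutil_le/(_ ord0 [ffun=> ord_max]).
by rewrite maxdis2 !disutil_misreported0 !disutil_misreported1 !ffunE; case: eqP.
Qed.

Theorem proposition2 (M : mechanism)
  (HM : forall (n m l : nat) (D : profile n m.+1 l), is_minmax D (M n m l D)) :
  exists (n m l : nat) (D : profile n m.+1 l) (i : 'I_n) (Di' : dvec m.+1 l),
    disutil D i (M n m l (update D i Di')) < disutil D i (M n m l D).
Proof.
exists 2, 1, 3, honest, ord0, misreport0.
have truthful := honest_minmax_last (HM 2 1 3 honest).
have manipulated := misreported_minmax_last (HM 2 1 3 misreported).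
by rewrite !disutil_honest0 (negbTE manipulated) truthful.
Qed.
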